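(* Let $G=(V,E)$ be a claw-free graph, let $v\in V$ and let $k$ be a positive integer. There exists an independent dominating set of $G$ of size at most $k$ containing $v$ if and only if there exists an independent dominating set of size at most $k-1$ in the induced subgraph $G[V\setminus N[v]]$.
   Context: Graphs are finite, simple, undirected; a graph is claw-free if it has no induced $K_{1,3}$. $N[v]$ is the closed neighbourhood of $v$. An independent dominating set is a set $S$ of pairwise non-adjacent vertices such that every vertex outside $S$ has a neighbour in $S$. *)

From mathcomp Require Import all_boot.
Set Implicit Arguments. Unset Strict Implicit. Unset Printing Implicit Defensive.

Definition simple_graph (T : finType) (e : rel T) : Prop :=
  symmetric e /\ irreflexive e.

Definition claw_free (T : finType) (e : rel T) : Prop :=
  forall x a b c : T,
    e x a -> e x b -> e x c ->
    a != b -> a != c -> b != c ->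
    ~~ e a b -> ~~ e a c -> ~~ e b c -> False.

Definition closed_nbhd (T : finType) (e : rel T) (v : T) : {set T} :=
  [set u | (u == v) || e v u].

Definition ids_in (T : finType) (e : rel T) (W S : {set T}) : Prop :=
  S \subset W /\
  (forall x y, x \in S -> y \in S -> ~~ e x y) /\
  (forall x, x \in W -> x \notin S -> exists2 y, y \in S & e x y).

Definition ids (T : finType) (e : rel T) (S : {set T}) : Prop :=
  ids_in e [set: T] S.

From mathcomp Require Import all_boot.

(* Deleting v from an independent dominating set S containing v leaves an
   independent dominating set of G - N[v]: every vertex outside N[v] was
   dominated by a member of S other than v.  Conversely, adding v to an
   independent dominating set of G - N[v] yields one of G, v dominating N[v]. *)

Section IdsAroundVertex.

Variables (T : finType) (e : rel T) (v : T).
Hypothesis e_sym : symmetric e.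

Lemma in_closed_nbhdC x :
  (x \in ~: closed_nbhd e v) = (x != v) && ~~ e v x.
Proof. by rewrite !inE negb_or. Qed.

Lemma ids_setD1 S :
  ids e S -> v \in S -> ids_in e (~: closed_nbhd e v) (S :\ v).
Proof.
move=> [_ [indS domS]] vS; split; [|split].
- apply/subsetP=> x; rewrite in_closed_nbhdC !inE => /andP[-> xS] /=.
  by rewrite indS.
- by move=> x y /setD1P[_ xS] /setD1P[_ yS]; apply: indS.
- move=> x; rewrite in_closed_nbhdC => /andP[xv nevx].
  rewrite !inE xv /= => xS.
  have [y yS exy] := domS x (in_setT x) xS.
  exists y => //; rewrite !inE yS andbT.
  by apply: contraNneq nevx => yv; rewrite e_sym -yv.
Qed.

Hypothesis e_irr : irreflexive e.

Lemma ids_setU1 S :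
  ids_in e (~: closed_nbhd e v) S -> ids e (v |: S).
Proof.
move=> [subS [indS domS]].
have nevS y : y \in S -> ~~ e v y.
  by move/(subsetP subS); rewrite in_closed_nbhdC => /andP[].
split; [exact: subsetT | split].
- move=> x y /setU1P[->|xS] /setU1P[->|yS].
  + by rewrite e_irr.
  + exact: nevS.
  + by rewrite e_sym nevS.
  + exact: indS.
- move=> x _; rewrite !inE negb_or => /andP[xv xS].
  have [evx | nevx] := boolP (e v x).
    by exists v; rewrite ?setU11 // e_sym.
  have xW : x \in ~: closed_nbhd e v by rewrite in_closed_nbhdC xv.
  have [y yS exy] := domS x xW xS.
  by exists y; rewrite // setU1r.
Qed.

End IdsAroundVertex.

Theorem lemma2 (T : finType) (e : rel T) (v : T) (k : nat) :
  simple_graph e -> claw_free e -> 0 < k ->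
  (exists S : {set T}, [/\ ids e S, #|S| <= k & v \in S]) <->
  (exists S : {set T},
      ids_in e (~: closed_nbhd e v) S /\ #|S| <= k - 1).
Proof.
move=> [e_sym e_irr] _ k_gt0; split.
- move=> [S [idsS leSk vS]].
  exists (S :\ v); split; first exact: ids_setD1.
  by move: leSk; rewrite (cardsD1 v S) vS add1n => /(leq_sub2r 1); rewrite subn1.
- move=> [S [idsS leSk]].
  have vNS : v \notin S.
    by apply/negP => /(subsetP idsS.1); rewrite in_closed_nbhdC eqxx.
  exists (v |: S); split; [exact: ids_setU1 | | exact: setU11].
  by rewrite cardsU1 vNS add1n -(subnK k_gt0) addn1 ltnS.
Qed.
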